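(* Let $(X,\mathcal{O})$ be a $\sigma$-compact metrizable space without isolated points and $K$ a partition of $X$ parametrized by a locally finite bi-infinite tree with reference point $(T,\pi,\phi)$. (1) For any metric $d$ on $X$ inducing $\mathcal{O}$ with $\mathrm{diam}(X,d)=\infty$, the function $g_d(w)=\mathrm{diam}(K_w,d)$ is a weight function. (2) For any Radon measure $\mu$ on $(X,\mathcal{O})$ with $\mu(X)=\infty$, $\mu(\{x\})=0$ for all $x$, and $\mu(K_w)>0$ for all $w\in T$, the function $g_\mu(w)=\mu(K_w)$ is a weight function.
   Context: Bi-infinite tree: $T$ countable, $\pi:T\to T$ with (T1) any $w,v$ have $n,m\ge0$ with $\pi^n(w)=\pi^m(v)$, (T2) $\pi^n(w)\ne w$ for $n\ge1$; locally finite: $\pi^{-1}(w)=S(w)$ finite for all $w$. Height $[w]=n-m$ where $\pi^n(w)=\pi^m(\phi)$, $(T)_n=\{w:[w]=n\}$, $\Sigma^*$ = sequences $(\omega_n)_{n\in\mathbb{Z}}$ with $\omega_n\in(T)_n$ and $\pi(\omega_{n+1})=\omega_n$. Partition: $w\mapsto K_w$ nonempty compact subsets of $X$ that are not single points, with (P1) $\bigcup_{v\in S(w)}K_v=K_w$, (P2) $\bigcap_{m\ge0}K_{\omega_m}$ is a single point for every $\omega\in\Sigma^*$, (P3) $\bigcup_{w\in(T)_0}K_w=X$. A weight function is $g:T\to(0,\infty)$ with (G1) $\lim_{n\to\infty}g(\pi^n(\phi))=\infty$, (G2) $g(\pi(w))\ge g(w)$ for all $w$, (G3) $\lim_{m\to\infty}g(\omega_m)=0$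 for all $\omega\in\Sigma^*$. *)

From HB Require Import structures.
From mathcomp Require Import all_boot all_order all_algebra.
From mathcomp Require Import all_classical all_reals all_analysis.
Set Implicit Arguments. Unset Strict Implicit. Unset Printing Implicit Defensive.
Import Order.TTheory GRing.Theory Num.Theory.
Import numFieldNormedType.Exports.
Local Open Scope classical_set_scope.
Local Open Scope ring_scope.

Section Tree.
Variables (T : countType) (pi : T -> T) (phi : T).

Definition tree_T1 := forall w v : T, exists n m : nat, iter n pi w = iter m pi v.
Definition tree_T2 := forall (w : T) (n : nat), (1 <= n)%N -> iter n pi w <> w.
Definition children (w : T) : set T := [set v | pi v = w].
Definition locally_finite_tree := forall w : T, finite_set (children w).
Definition bi_infinite_tree := tree_T1 /\ tree_T2.

Definition has_height (w : T) (k : int) : Prop :=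
  exists n m : nat, iter n pi w = iter m pi phi /\ k = (n%:Z - m%:Z).
Definition level (k : int) : set T := [set w | has_height w k].
Definition Sigma_star (om : int -> T) : Prop :=
  (forall k : int, level k (om k)) /\ (forall k : int, pi (om (k + 1)) = om k).
End Tree.

Definition tree_partition (X : topologicalType) (T : countType) (pi : T -> T)
    (phi : T) (K : T -> set X) : Prop :=
  [/\ (forall w, K w !=set0 /\ compact (K w) /\ ~ (exists x, K w = [set x])),
      (forall w, \bigcup_(v in children pi w) K v = K w),
      (forall om, Sigma_star pi phi om ->
          exists x, \bigcap_(m in [set: nat]) K (om m%:Z) = [set x]) &
      \bigcup_(w in level pi phi 0) K w = [set: X] ].

Definition weight_function (R : realType) (T : countType) (pi : T -> T)
    (phi : T) (g : T -> R) : Prop :=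
  [/\ (forall w, 0 < g w),
      (fun n : nat => g (iter n pi phi)) @ \oo --> +oo,
      (forall w, g w <= g (pi w)) &
      (forall om, Sigma_star pi phi om -> (fun m : nat => g (om m%:Z)) @ \oo --> 0)].

Definition is_metric (R : realType) (X : Type) (d : X -> X -> R) : Prop :=
  [/\ (forall x y, 0 <= d x y), (forall x y, d x y = 0 <-> x = y),
      (forall x y, d x y = d y x) &
      (forall x y z, d x z <= d x y + d y z)].

Definition metric_induces (R : realType) (X : topologicalType)
    (d : X -> X -> R) : Prop :=
  forall U : set X, open U <->
    (forall x, U x -> exists2 e : R, 0 < e & [set y | d x y < e] `<=` U).

Definition metrizable (R : realType) (X : topologicalType) : Prop :=
  exists d : X -> X -> R, is_metric d /\ metric_induces d.

Definition sigma_compact (X : topologicalType) : Prop :=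
  exists C : nat -> set X, (forall n, compact (C n)) /\ \bigcup_n C n = [set: X].

Definition no_isolated_points (X : topologicalType) : Prop :=
  forall x : X, ~ open [set x].

Definition diam (R : realType) (X : Type) (d : X -> X -> R) (A : set X) : \bar R :=
  ereal_sup [set (d p.1 p.2)%:E | p in A `*` A].

Definition borel (X : topologicalType) : set (set X) :=
  smallest (sigma_algebra [set: X]) (@open X).

Definition is_radon_measure (R : realType) (X : topologicalType)
    (mu : set X -> \bar R) : Prop :=
  [/\ mu set0 = 0%E /\ (forall A, borel A -> (0 <= mu A)%E),
      (forall F : nat -> set X, (forall n, borel (F n)) -> trivIset setT F ->
          (fun n => \sum_(0 <= i < n) mu (F i))%E @ \oo --> mu (\bigcup_n F n)),
      (forall C, compact C -> (mu C < +oo)%E),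
      (forall A, borel A ->
          mu A = ereal_inf [set mu U | U in [set U | open U /\ A `<=` U]]) &
      (forall U, open U ->
          mu U = ereal_sup [set mu C | C in [set C | compact C /\ C `<=` U]]) ].

From HB Require Import structures.
From mathcomp Require Import all_boot all_order all_algebra.
From mathcomp Require Import all_classical all_reals all_analysis.
From mathcomp Require Import lra.
Import Order.TTheory GRing.Theory Num.Theory.
Import numFieldNormedType.Exports.
Local Open Scope classical_set_scope.
Local Open Scope ring_scope.

(* By (P1) the sets K_w grow along [pi], so both weights are monotone; they
   are finite since K_w is compact (μ is Radon), and diameters are positive
   since K_w is not a singleton. By (P3) the sets K along the ancestors of
   [phi] exhaust X, so the weights tend to diam X = ∞, resp. μ(X) = ∞ (by the
   definition of the supremum, resp. continuity from below). Along a geodesic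
   ω the compact sets K_{ω_m} decrease to a single point (P2): by compactness
   they eventually lie in every ball around it, so their diameters tend to 0,
   and by continuity from above their measures tend to the mass of that point,
   which is 0. *)

Lemma fine_weight_function (R : realType) (T : countType) (pi : T -> T)
    (phi : T) (g : T -> \bar R) :
  (forall w, (0 < g w < +oo)%E) ->
  g (iter n pi phi) @[n --> \oo] --> +oo%E ->
  (forall w, (g w <= g (pi w))%E) ->
  (forall om, Sigma_star pi phi om -> g (om m%:Z) @[m --> \oo] --> 0%E) ->
  weight_function pi phi (fun w => fine (g w)).
Proof.
move=> g_pos g_cvgy g_le g_cvg0.
have g_fin w : g w \is a fin_num.
  by have /andP[g0 gy] := g_pos w; rewrite ge0_fin_numE // ltW.
split.
- by move=> w; exact: fine_gt0.
- by apply/cvgeryP; under eq_fun do rewrite fineK //.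
- by move=> w; exact: fine_le.
- by move=> om /g_cvg0 /fine_cvgP[].
Qed.

Section Partition.
Context {X : topologicalType} {T : countType} { pi : T -> T } {phi : T}
  {K : T -> set X}.
Hypothesis hK : tree_partition pi phi K.

Lemma partition_nonempty w : K w !=set0.
Proof. by case: hK => /(_ w)[]. Qed.

Lemma partition_compact w : compact (K w).
Proof. by case: hK => /(_ w)[_ []]. Qed.

Lemma partition_two_points w : exists p q, [/\ K w p, K w q & p <> q].
Proof.
case: hK => /(_ w)[[p Kp] [_ not_single]] _ _ _; exists p.
apply: contrapT => no_q; apply: not_single; exists p.
apply/seteqP; split=> [q Kq|q -> //]; apply: contrapT => qp.
by apply: no_q; exists q; split=> //; exact: nesym.
Qed.

Lemma partition_sub_parent w : K w `<=` K (pi w).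
Proof. by case: hK => _ P1 _ _ x Kx; rewrite -P1; exists w. Qed.

Lemma partition_sub_ancestor n w : K w `<=` K (iter n pi w).
Proof. by elim: n => [//|n IH] x /IH; exact: partition_sub_parent. Qed.

Lemma partition_ancestors_nondecreasing n m : (n <= m)%N ->
  K (iter n pi phi) `<=` K (iter m pi phi).
Proof. by move=> nm; rewrite -(subnK nm) iterD; exact: partition_sub_ancestor. Qed.

Lemma partition_ancestors_cover : \bigcup_n K (iter n pi phi) = [set: X].
Proof.
case: hK => _ _ _ P3; apply/seteqP; split=> // x _.
have : [set: X] x by [].
rewrite -P3 => -[w [a [b [ab_eq /eqP]]]].
rewrite eq_sym subr_eq0 eqz_nat => /eqP ab Kwx; subst b.
by exists a => //; rewrite -ab_eq; exact: partition_sub_ancestor.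
Qed.

Lemma partition_geodesic_nonincreasing om : Sigma_star pi phi om ->
  forall n m : nat, (n <= m)%N -> K (om m%:Z) `<=` K (om n%:Z).
Proof.
move=> [_ om_pi] n m /subnK <-; elim: (m - n)%N => [//|k IH].
have -> : (k.+1 + n)%:Z = (k + n)%:Z + 1 by rewrite addSn -addn1 PoszD.
by apply: subset_trans (partition_sub_parent _) _; rewrite om_pi.
Qed.

End Partition.

Lemma compact_nondecreasing_open_cover {X : topologicalType} {A : set X}
    (U : nat -> set X) :
  compact A -> (forall n, open (U n)) ->
  (forall n m, (n <= m)%N -> U n `<=` U m) ->
  A `<=` \bigcup_n U n -> exists N, A `<=` U N.
Proof.
move=> cA oU mU AU; apply/not_existsP => notAU.
have /choice[y yP] : forall N, exists y, A y /\ ~ U N y.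
  by move=> N; have /existsNP[y /not_implyP[Ay nUy]] := notAU N; exists y.
have yA : (y @ \oo) A by exists 0%N => // n _; exact: (yP n).1.
have [z [Az zcl]] := cA _ _ yA.
have [M _ UMz] := AU z Az.
have UM_nbhs : nbhs z (U M) by apply: open_nbhs_nbhs.
have yUM : (y @ \oo) (~` U M).
  by exists M => // n /= Mn UMy; apply: (yP n).2; exact: mU Mn _ UMy.
by have [u [] //] := zcl _ _ yUM UM_nbhs.
Qed.

Section Diam.
Context {R : realType} {X : Type} (d : X -> X -> R).

Lemma dist_le_diam {A : set X} {p q : X} : A p -> A q ->
  ((d p q)%:E <= diam d A)%E.
Proof. by move=> Ap Aq; apply: ereal_sup_ubound; exists (p, q). Qed.

Lemma diam_le (A : set X) M : (forall p q, A p -> A q -> d p q <= M) ->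
  (diam d A <= M%:E)%E.
Proof.
by move=> AM; apply: ge_ereal_sup => _ [[p q] [/= Ap Aq] <-]; rewrite lee_fin AM.
Qed.

Lemma le_diam {A B : set X} : A `<=` B -> (diam d A <= diam d B)%E.
Proof.
move=> AB; apply: ereal_sup_le => _ [[p q] [/= Ap Aq] <-].
by exists (p, q) => //; split; exact: AB.
Qed.

Lemma diam_nondecreasing_cvgy (A : nat -> set X) :
  (forall n m, (n <= m)%N -> A n `<=` A m) ->
  diam d (\bigcup_n A n) = +oo%E -> diam d (A n) @[n --> \oo] --> +oo%E.
Proof.
move=> mA diamy; apply/cvgeyPge => M.
have /ereal_sup_gt[_ [[p q] [[n1 _ Ap] [n2 _ Aq]] <-]] :
  (M%:E < diam d (\bigcup_n A n))%E by rewrite diamy ltey.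
rewrite lte_fin => Mpq; exists (maxn n1 n2) => // n /=.
rewrite geq_max => /andP[n1n n2n].
apply: le_trans (dist_le_diam (mA _ _ n1n _ Ap) (mA _ _ n2n _ Aq)).
by rewrite lee_fin ltW.
Qed.

End Diam.

Section Metric.
Context {R : realType} {X : topologicalType} {d : X -> X -> R}.
Hypotheses (hd : is_metric d) (hind : metric_induces d).

Let d_ge0 x y : 0 <= d x y. Proof. by case: hd. Qed.
Let d_eq0 x y : d x y = 0 <-> x = y. Proof. by case: hd. Qed.
Let d_sym x y : d x y = d y x. Proof. by case: hd. Qed.
Let d_triangle x y z : d x z <= d x y + d y z. Proof. by case: hd. Qed.

Local Notation mball x e := [set y | d x y < e].

Lemma mball_open x e : open (mball x e).
Proof.
apply/hind => y /= dxy; exists (e - d x y); first by rewrite subr_gt0.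
by move=> z /= dyz; have := d_triangle x y z; lra.
Qed.

Lemma mball_center x e : 0 < e -> mball x e x.
Proof. by rewrite /= (proj2 (d_eq0 x x) erefl). Qed.

Lemma diam_mball_le x e : (diam d (mball x e) <= (e + e)%:E)%E.
Proof.
by apply: diam_le => p q /= xp xq; have := d_triangle p x q; rewrite (d_sym p x); lra.
Qed.

Lemma metric_hausdorff : hausdorff_space X.
Proof.
move=> p q pq_cl; apply: contrapT => pq.
have dpq : 0 < d p q by rewrite lt0r d_ge0 andbT; apply/eqP => /d_eq0.
have ball_nbhs x : nbhs x (mball x (d p q / 2)).
  by apply: open_nbhs_nbhs; split; [exact: mball_open|apply: mball_center; lra].
have [z [/= pz qz]] := pq_cl _ _ (ball_nbhs p) (ball_nbhs q).
by have := d_triangle p z q; rewrite (d_sym z q); lra.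
Qed.

Lemma diam_gt0 {A : set X} {p q : X} : A p -> A q -> p <> q -> (0 < diam d A)%E.
Proof.
move=> Ap Aq pq; apply: lt_le_trans (dist_le_diam d Ap Aq).
by rewrite lte_fin lt0r d_ge0 andbT; apply/eqP => /d_eq0.
Qed.

Lemma compact_diam_lty {A : set X} : compact A -> (diam d A < +oo)%E.
Proof.
move=> cA; have [[x Ax]|A0] := pselect (A !=set0); last first.
  by apply: le_lt_trans (diam_le d A 0 _) (ltey _) => p q Ap; case: A0; exists p.
have [N AN] : exists N, A `<=` mball x N%:R.
  apply: (compact_nondecreasing_open_cover (fun n => mball x n%:R) cA).
  - by move=> n; exact: mball_open.
  - by move=> n m nm y /= xy; apply: lt_le_trans xy _; rewrite ler_nat.
  - by move=> y _; exists (Num.truncn (d x y)).+1 => //; exact: truncnS_gt.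
exact: le_lt_trans (le_diam d AN) (le_lt_trans (diam_mball_le _ _) (ltey _)).
Qed.

Lemma nested_compact_sub_mball {C : nat -> set X} {x : X} :
  (forall n, compact (C n)) -> (forall n m, (n <= m)%N -> C m `<=` C n) ->
  \bigcap_n C n = [set x] -> forall e, 0 < e -> exists N, C N `<=` mball x e.
Proof.
move=> cC mC Cx e e0.
have [N CN] : exists N, C 0%N `<=` mball x e `|` ~` C N.
  apply: (compact_nondecreasing_open_cover (fun n => mball x e `|` ~` C n) (cC 0%N)).
  - move=> n; apply: openU; first exact: mball_open.
    exact/closed_openC/(compact_closed metric_hausdorff).
  - by move=> n m nm y [|nCny]; [left|right => /(mC _ _ nm)].
  - move=> y _; have [Cy|/existsNP[n nCny]] := pselect (forall n, C n y).
    + have : [set x] y by rewrite -Cx => n _; exact: Cy.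
      by move=> /= ->; exists 0%N => //; left; exact: mball_center.
    + by exists n => //; right.
by exists N => y CNy; case: (CN y (mC _ _ (leq0n N) _ CNy)).
Qed.

Lemma diam_nested_compact_cvg0 {C : nat -> set X} {x : X} :
  (forall n, compact (C n)) -> (forall n m, (n <= m)%N -> C m `<=` C n) ->
  \bigcap_n C n = [set x] -> diam d (C n) @[n --> \oo] --> 0%E.
Proof.
move=> cC mC Cx.
have Cnx n : C n x by have : [set x] x by []; rewrite -Cx; apply.
have diam_ge0 n : (0 <= diam d (C n))%E.
  apply: le_trans (dist_le_diam d (Cnx n) (Cnx n)).
  by rewrite lee_fin (proj2 (d_eq0 x x) erefl).
have diam_fin n : diam d (C n) \is a fin_num.
  by rewrite ge0_fin_numE // compact_diam_lty.
apply: cvg_EFin; first exact: nearW.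
apply/cvgrPdist_le => e e0.
have [N CN] : exists N, C N `<=` mball x (e / 2).
  by apply: nested_compact_sub_mball cC mC Cx _ _; lra.
exists N => // n /= Nn; rewrite sub0r normrN ger0_norm ?fine_ge0 //.
rewrite -lee_fin fineK //; apply: le_trans (le_diam d (subset_trans (mC _ _ Nn) CN)) _.
by apply: le_trans (diam_mball_le _ _) _; rewrite lee_fin; lra.
Qed.

End Metric.

Lemma compact_borel (X : topologicalType) (A : set X) :
  hausdorff_space X -> compact A -> borel A.
Proof.
move=> hX /(compact_closed hX) /closed_openC oAC; rewrite -[A]setCK -setTD.
have [_ borelC _] := smallest_sigma_algebra [set: X] (@open X).
by apply: borelC; exact: sub_gen_smallest.
Qed.

Section RadonMeasure.
Context {R : realType} {X : topologicalType} (x0 : X) {mu : set X -> \bar R}.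
Hypothesis hmu : is_radon_measure mu.

(* The measurable types of the library have pointed carriers, whence [x0]. *)
Definition pointedX : Type := X.
HB.instance Definition _ := Choice.on pointedX.
HB.instance Definition _ := isPointed.Build pointedX x0.
Definition borelX := g_sigma_algebraType (@open X : set (set pointedX)).

(* [is_radon_measure] constrains [mu] on Borel sets only, whereas a library
   measure must be nonnegative on every set. *)
Definition borel_restr (A : set borelX) : \bar R :=
  if `[< borel A >] then mu A else 0%E.

Let borel_restrE A : borel A -> borel_restr A = mu A.
Proof. by move=> bA; rewrite /borel_restr asboolT. Qed.

Let borel_restr0 : borel_restr set0 = 0%E.
Proof.
case: hmu => -[mu0 _] _ _ _ _; rewrite borel_restrE //.
by apply: sub_gen_smallest; exact: open0.
Qed.

Let borel_restr_ge0 A : (0 <= borel_restr A)%E.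
Proof.
case: hmu => -[_ mu_ge0] _ _ _ _; rewrite /borel_restr.
by case: asboolP => // bA; exact: mu_ge0.
Qed.

Let borel_restr_sigma_additive : semi_sigma_additive borel_restr.
Proof.
case: hmu => _ mu_sigma _ _ _ F bF tF bUF; rewrite borel_restrE //.
suff -> : (fun n => \sum_(0 <= i < n) borel_restr (F i))%E =
          (fun n => \sum_(0 <= i < n) mu (F i))%E by exact: mu_sigma.
by apply/funext => n; apply: eq_bigr => i _; exact: borel_restrE _ (bF i).
Qed.

HB.instance Definition _ := isMeasure.Build _ borelX R borel_restr
  borel_restr0 borel_restr_ge0 borel_restr_sigma_additive.

Lemma le_radon {A B : set X} : borel A -> borel B -> A `<=` B -> (mu A <= mu B)%E.
Proof.
move=> bA bB AB; rewrite -(borel_restrE _ bA) -(borel_restrE _ bB).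
by apply: (le_measure borel_restr); rewrite ?inE.
Qed.

Lemma radon_nondecreasing_cvg (F : nat -> set X) : (forall n, borel (F n)) ->
  (forall n m, (n <= m)%N -> F n `<=` F m) ->
  mu (F n) @[n --> \oo] --> mu (\bigcup_n F n).
Proof.
move=> bF mF.
have bUF : borel (\bigcup_n F n) by exact: (@bigcupT_measurable _ borelX F bF).
rewrite -(borel_restrE _ bUF); under eq_fun do rewrite -borel_restrE //.
apply: (nondecreasing_cvg_mu (F := F : nat -> set borelX)) => //.
by move=> n m nm; apply/subsetPset; exact: mF.
Qed.

Lemma radon_nonincreasing_cvg (F : nat -> set X) : (forall n, borel (F n)) ->
  (forall n m, (n <= m)%N -> F m `<=` F n) -> (mu (F 0%N) < +oo)%E ->
  mu (F n) @[n --> \oo] --> mu (\bigcap_n F n).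
Proof.
move=> bF mF F0_fin.
have bIF : borel (\bigcap_n F n) by exact: (@bigcapT_measurable _ borelX F bF).
rewrite -(borel_restrE _ bIF); under eq_fun do rewrite -borel_restrE //.
apply: (nonincreasing_cvg_mu (F := F : nat -> set borelX)) => //.
- by rewrite -(borel_restrE _ (bF 0%N)) in F0_fin.
- by move=> n m nm; apply/subsetPset; exact: mF.
Qed.

End RadonMeasure.

Lemma diam_weight_function (R : realType) (X : topologicalType) (T : countType)
    (pi : T -> T) (phi : T) (K : T -> set X) (d : X -> X -> R) :
  tree_partition pi phi K -> is_metric d -> metric_induces d ->
  diam d [set: X] = +oo%E ->
  weight_function pi phi (fun w => fine (diam d (K w))).
Proof.
move=> hK hd hind diamX; apply: fine_weight_function.
- move=> w; have [p [q [Kp Kq pq]]] := partition_two_points hK w.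
  by rewrite (diam_gt0 hd Kp Kq pq) (compact_diam_lty hd hind (partition_compact hK w)).
- apply: (diam_nondecreasing_cvgy d (fun n => K (iter n pi phi))).
    exact: partition_ancestors_nondecreasing hK.
  by rewrite partition_ancestors_cover.
- by move=> w; apply/(le_diam d)/(partition_sub_parent hK).
- move=> om hom; case: (hK) => _ _ /(_ om hom)[x omx] _.
  apply: (diam_nested_compact_cvg0 hd hind _ _ omx) => [m|].
    exact: partition_compact hK (om m).
  exact: partition_geodesic_nonincreasing hK _ hom.
Qed.

Lemma measure_weight_function (R : realType) (X : topologicalType) (T : countType)
    (pi : T -> T) (phi : T) (K : T -> set X) (mu : set X -> \bar R) :
  tree_partition pi phi K -> hausdorff_space X -> is_radon_measure mu ->
  mu [set: X] = +oo%E -> (forall x, mu [set x] = 0%E) ->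
  (forall w, (0 < mu (K w))%E) ->
  weight_function pi phi (fun w => fine (mu (K w))).
Proof.
move=> hK hX hmu muX mu1 mu_pos; have [x0 _] := partition_nonempty hK phi.
have K_borel w : borel (K w) by exact: compact_borel hX (partition_compact hK w).
case: (hmu) => _ _ mu_compact _ _; apply: fine_weight_function.
- by move=> w; rewrite mu_pos mu_compact //; exact: partition_compact hK w.
- rewrite -muX -(partition_ancestors_cover hK).
  apply: (radon_nondecreasing_cvg x0 hmu) => [n|]; first exact: K_borel.
  exact: partition_ancestors_nondecreasing hK.
- move=> w; apply: (le_radon x0 hmu); [exact: K_borel|exact: K_borel|].
  exact: partition_sub_parent hK w.
- move=> om hom; case: (hK) => _ _ /(_ om hom)[x omx] _.
  rewrite -(mu1 x) -omx.
  apply: (radon_nonincreasing_cvg x0 hmu) => [m||]; first exact: K_borel.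
    exact: partition_geodesic_nonincreasing hK _ hom.
  exact/mu_compact/(partition_compact hK).
Qed.

Theorem proposition3p2 (R : realType) (X : topologicalType) (T : countType)
    (pi : T -> T) (phi : T) (K : T -> set X)
    (hsc : sigma_compact X) (hmet : metrizable R X) (hiso : no_isolated_points X)
    (htree : bi_infinite_tree pi) (hlf : locally_finite_tree pi)
    (hK : tree_partition pi phi K) :
  (forall d : X -> X -> R, is_metric d -> metric_induces d ->
      diam d [set: X] = +oo%E ->
      weight_function pi phi (fun w => fine (diam d (K w)))) /\
  (forall mu : set X -> \bar R, is_radon_measure mu ->
      mu [set: X] = +oo%E ->
      (forall x : X, mu [set x] = 0%E) ->
      (forall w : T, (0 < mu (K w))%E) ->
      weight_function pi phi (fun w => fine (mu (K w)))).
Proof.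
split=> [d|mu]; first exact: diam_weight_function.
have [d [hd hind]] := hmet.
exact: measure_weight_function (metric_hausdorff hd hind).
Qed.
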